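(* Let $S,T$ be two causal teams over a signature $\sigma$, or two generalized causal teams over $\sigma$, with $T$ nonempty. Then $S\models\Xi^T$ if and only if $T\not\preccurlyeq S$ (with $\models^c$, respectively $\models^g$).
   Context: A signature $\sigma=(\mathrm{Dom},\mathrm{Ran})$: $\mathrm{Dom}$ nonempty finite set of variables, each with nonempty finite range $\mathrm{Ran}(X)$; $\mathbf X=\mathbf x$ abbreviates $X_1=x_1\wedge\dots\wedge X_n=x_n$ ($\mathbf x\in\prod\mathrm{Ran}(X_i)$), inconsistent if it contains $X=x,X=x'$ with $x\ne x'$. ${=}(V)$ is the constancy atom; $\bot$ abbreviates $X=x\wedge\neg(X=x)$; $\alpha\supset\beta$ abbreviates $\neg\alpha\vee\beta$; empty $\vee$-disjunction is $\bot$. Systems of functions $\mathcal F$: for each $V\in\mathrm{En}(\mathcal F)\subseteq\mathrm{Dom}$ parents $PA^{\mathcal F}_V\subseteq\mathrm{Dom}\setminus\{V\}$ and $\mathcal F_V:\mathrm{Ran}(PA^{\mathcal F}_V)\to\mathrm{Ran}(V)$; $\mathrm{Ex}(\mathcal F)=\mathrm{Dom}\setminus\mathrm{En}(\mathcal F)$; only recursive (acyclic parent graph), forming $\mathbb F_\sigma$. Assignments ($s(X)\in\mathrm{Ran}(X)$) form $\mathbb A_\sigma$; $s$ compatible with $\mathcal F$ if $s(V)=\mathcal F_V(s(PA^{\mathcal F}_V))$ for $V\in\mathrm{En}(\mathcal F)$. For consistent $\mathbf X=\mathbf x$: $\mathcal F_{\mathbf X=\mathbf x}$ restricts $\mathcal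 F$ to $\mathrm{En}(\mathcal F)\setminus\mathbf X$; $s^{\mathcal F}_{\mathbf X=\mathbf x}$: $X_i\mapsto x_i$, $V\mapsto s(V)$ on $\mathrm{Ex}(\mathcal F)\setminus\mathbf X$, $V\mapsto\mathcal F_V(s^{\mathcal F}_{\mathbf X=\mathbf x}(PA^{\mathcal F}_V))$ on $\mathrm{En}(\mathcal F)\setminus\mathbf X$. Causal team $T=(T^-,\mathcal F)$ ($T^-$ compatible assignments; empty team components identified as $\emptyset$); causal subteams $(S^-,\mathcal F)$, $S^-\subseteq T^-$; $T_{\mathbf X=\mathbf x}=(\{s^{\mathcal F}_{\mathbf X=\mathbf x}:s\in T^-\},\mathcal F_{\mathbf X=\mathbf x})$; $\models^c$: $T\models X=x$ iff $s(X)=x$ for all $s\in T^-$; $T\models{=}(V)$ iff $s(V)=s'(V)$ for all $s,s'\in T^-$; $T\models\neg\alpha$ iff $(\{s\},\mathcal F)\not\models\alpha$ for all $s\in T^-$; $\wedge$ classical; $T\models\varphi\vee\psi$ iff causal subteams $T_1,T_2$ exist with $T_1^-\cup T_2^-=T^-$, $T_1\models\varphi$, $T_2\models\psi$; $T\models\mathbf X=\mathbf x\;\Box\!\!\rightarrow\varphi$ iff $\mathbf X=\mathbf x$ inconsistent or $T_{\mathbf X=\mathbf x}\models\varphi$. Generalized causal team: a set $T$ of compatible pairs $(s,\mathcal F)$, $\mathcal F\in\mathbb F_\sigma$; subteams are subsets; $T^-=\{s:(s,\mathcal F)\in T\}$; $T_{\mathbf X=\mathbf x}=\{(s^{\mathcal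 F}_{\mathbf X=\mathbf x},\mathcal F_{\mathbf X=\mathbf x}):(s,\mathcal F)\in T\}$; $\models^g$: same clauses except $T\models\neg\alpha$ iff $\{(s,\mathcal F)\}\not\models\alpha$ for all $(s,\mathcal F)\in T$, and $T\models\varphi\vee\psi$ iff $T=T_1\cup T_2$ with $T_1\models\varphi$, $T_2\models\psi$. $\mathrm{Cn}(\mathcal F)=\{V\in\mathrm{En}(\mathcal F):\mathcal F_V\text{ constant}\}$; $\mathcal F_V\sim\mathcal G_V$ iff $\mathcal F_V(\mathbf x\mathbf y)=\mathcal G_V(\mathbf x\mathbf z)$ for all $\mathbf x\in\mathrm{Ran}(PA^{\mathcal F}_V\cap PA^{\mathcal G}_V)$, $\mathbf y\in\mathrm{Ran}(PA^{\mathcal F}_V\setminus PA^{\mathcal G}_V)$, $\mathbf z\in\mathrm{Ran}(PA^{\mathcal G}_V\setminus PA^{\mathcal F}_V)$; $\mathcal F\sim\mathcal G$ iff $\mathrm{En}(\mathcal F)\setminus\mathrm{Cn}(\mathcal F)=\mathrm{En}(\mathcal G)\setminus\mathrm{Cn}(\mathcal G)$ and $\mathcal F_V\sim\mathcal G_V$ for each such $V$. Nonempty causal teams: $(T^-,\mathcal F)\approx(S^-,\mathcal G)$ iff $T^-=S^-$, $\mathcal F\sim\mathcal G$. Generalized: $T^{\mathcal F}=\{(s,\mathcal G)\in T:\mathcal G\sim\mathcal F\}$, $S\approx T$ iff $(S^{\mathcal F})^-=(T^{\mathcal F})^-$ for all $\mathcal F$; on pairs $(s,\mathcal F)\approx(t,\mathcal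 G)$ iff $s=t$ and $\mathcal F\sim\mathcal G$, and $T/_{\approx}$ is the set of $\approx$-classes of elements of $T$. $S\preccurlyeq T$ iff $S\approx R$ for some causal subteam $R$ of $T$ ($\emptyset\preccurlyeq T$ always). For a causal team $T=(T^-,\mathcal F)$, $T^g=\{(s,\mathcal F):s\in T^-\}$. Formulas: $\Theta^{A}:=\bigvee_{s\in A}\bigwedge_{V\in\mathrm{Dom}}V=s(V)$ for $A\subseteq\mathbb A_\sigma$. With $\mathbf W_V$ listing $\mathrm{Dom}\setminus\{V\}$: $\Phi^{\mathcal F}:=\bigwedge_{V\in\mathrm{En}(\mathcal F)\setminus\mathrm{Cn}(\mathcal F)}\eta(V)\wedge\bigwedge_{V\notin\mathrm{En}(\mathcal F)\setminus\mathrm{Cn}(\mathcal F)}\xi(V)$, $\eta(V)$ the conjunction of all $(\mathbf W=\mathbf w\wedge PA^{\mathcal F}_V=\mathbf p)\;\Box\!\!\rightarrow V=\mathcal F_V(\mathbf p)$ ($\mathbf W$ listing $\mathrm{Dom}\setminus(PA^{\mathcal F}_V\cup\{V\})$, $\mathbf w\in\mathrm{Ran}(\mathbf W)$, $\mathbf p\in\mathrm{Ran}(PA^{\mathcal F}_V)$), $\xi(V)$ the conjunction of all $V=v\supset(\mathbf W_V=\mathbf w\;\Box\!\!\rightarrow V=v)$. $\chi:=\bigwedge_{V}\bigwedge_{\mathbf w\in\mathrm{Ran}(\mathbf W_V)}(\mathbf W_V=\mathbf w\;\Box\!\!\rightarrow{=}(V))\wedge\bigwedge_V{=}(V)$; $\chi_0:=\bot$,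 $\chi_k:=\chi\vee\dots\vee\chi$ ($k$ disjuncts). For a nonempty generalized causal team $T$ with $|T/_{\approx}|=k+1$: $\Xi^T:=\chi_k\vee\Theta^{\mathbb A_\sigma\setminus T^-}\vee\bigvee\{\Theta^{\{s\}}\wedge\Phi^{\mathcal F}: s\in T^-,\ \mathcal F\in\mathbb F_\sigma,\ \{(s,\mathcal F)\}\not\preccurlyeq T\}$. For a nonempty causal team $T$, $\Xi^T:=\Xi^{T^g}$. *)

From mathcomp Require Import all_boot.
Set Implicit Arguments.
Unset Strict Implicit.
Unset Printing Implicit Defensive.

Section Signature.
Variables (V : finType) (Ran : V -> finType).

Definition asg : finType := {dffun forall X : V, Ran X}.

(* pairs X = x *)
Definition lit : finType := {X : V & Ran X}.

(* A function F_V : Ran(PA_V) -> Ran(V) is represented as a function on full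
   assignments depending only on the variables of PA_V. *)
Definition fnT (X : V) : finType := {ffun asg -> Ran X}.

(* raw data: parent sets and (optional) functions; None = exogenous *)
Definition rawsys : finType :=
  ({ffun V -> {set V}} * {dffun forall X : V, option (fnT X)})%type.

Definition parent_rel (r : rawsys) : rel V := fun a b => a \in r.1 b.

Definition wf_sys (r : rawsys) : bool :=
  [forall X, (r.2 X == None) ==> (r.1 X == set0)] &&
  [forall X, X \notin r.1 X] &&
  [forall X, match r.2 X with
             | Some f => [forall s : asg, forall t : asg,
                           [forall W in r.1 X, s W == t W] ==> (f s == f t)]
             | None => true end] &&
  (* recursiveness: the parent graph is acyclic *)
  [forall a, forall b, (a \in r.1 b) ==> ~~ connect (parent_rel r) b a].

Definition system : finType := {r : rawsys | wf_sys r}.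

Definition PA (F : system) (X : V) : {set V} := (val F).1 X.
Definition Fn (F : system) (X : V) : option (fnT X) := (val F).2 X.
Definition En (F : system) : {set V} := [set X | Fn F X != None].
Definition Cn (F : system) : {set V} :=
  [set X | match Fn F X with
           | Some f => [forall s : asg, forall t : asg, f s == f t]
           | None => false end].

Definition compatible (s : asg) (F : system) : bool :=
  [forall X, match Fn F X with Some f => s X == f s | None => true end].

Definition consistent (A : seq lit) : bool :=
  all (fun p => all (fun q => (tag p == tag q) ==> (p == q)) A) A.

Definition ivars (A : seq lit) : seq V := [seq tag p | p <- A].

Definition interv_raw (F : system) (A : seq lit) : rawsys :=
  ([ffun Y => if Y \in ivars A then set0 else PA F Y],
   [ffun Y => if Y \in ivars A then None else Fn F Y]).
Definition intervF (F : system) (A : seq lit) : system :=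
  insubd F (interv_raw F A).

(* s^F_{X=x}: the assignment t with t(X_i) = x_i, t(V) = s(V) on Ex(F)\X and
   t(V) = F_V(t(PA_V)) on En(F)\X (unique for recursive F). *)
Definition interv_cond (F : system) (A : seq lit) (s t : asg) : bool :=
  all (fun p => Tagged Ran (t (tag p)) == p) A &&
  [forall Y, (Y \notin ivars A) ==>
     (t Y == match Fn F Y with Some f => f t | None => s Y end)].
Definition interv_s (F : system) (A : seq lit) (s : asg) : asg :=
  odflt s [pick t | interv_cond F A s t].

Inductive form : Type :=
| fEq (X : V) (x : Ran X)
| fDep (X : V)
| fNeg (a : form)
| fAnd (a b : form)
| fOr (a b : form)
| fCf (A : seq lit) (b : form).

Fixpoint sat_c (F : system) (T : {set asg}) (phi : form) : Prop :=
  match phi with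
  | fEq X x => forall s, s \in T -> s X = x
  | fDep X => forall s s', s \in T -> s' \in T -> s X = s' X
  | fNeg a => forall s, s \in T -> ~ sat_c F [set s] a
  | fAnd a b => sat_c F T a /\ sat_c F T b
  | fOr a b => exists T1 T2 : {set asg},
                 T1 :|: T2 = T /\ sat_c F T1 a /\ sat_c F T2 b
  | fCf A b => ~~ consistent A \/
               sat_c (intervF F A) [set interv_s F A s | s in T] b
  end.

Fixpoint sat_g (T : {set (asg * system)}) (phi : form) : Prop :=
  match phi with
  | fEq X x => forall p, p \in T -> p.1 X = x
  | fDep X => forall p p', p \in T -> p' \in T -> p.1 X = p'.1 X
  | fNeg a => forall p, p \in T -> ~ sat_g [set p] a
  | fAnd a b => sat_g T a /\ sat_g T b
  | fOr a b => exists T1 T2 : {set (asg * system)},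
                 T1 :|: T2 = T /\ sat_g T1 a /\ sat_g T2 b
  | fCf A b => ~~ consistent A \/
               sat_g [set (interv_s p.2 A p.1, intervF p.2 A) | p in T] b
  end.

Definition compatible_c (F : system) (T : {set asg}) : bool :=
  [forall s in T, compatible s F].
Definition compatible_g (T : {set (asg * system)}) : bool :=
  [forall p in T, compatible p.1 p.2].

(* F_V ~ G_V, written out for functions on full assignments *)
Definition fn_sim (X : V) (F G : system) : bool :=
  match Fn F X, Fn G X with
  | Some f, Some g =>
      [forall s : asg, forall t : asg, [forall W in PA F X :&: PA G X, s W == t W]
                             ==> (f s == g t)]
  | _, _ => false
  end.

Definition sys_sim (F G : system) : bool :=
  (En F :\: Cn F == En G :\: Cn G) &&
  [forall X in En F :\: Cn F, fn_sim X F G].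

Definition approx_c (T : {set asg} * system) (S : {set asg} * system) : bool :=
  (T.1 != set0) && (S.1 != set0) && (T.1 == S.1) && sys_sim T.2 S.2.

Definition preceq_c (S T : {set asg} * system) : bool :=
  (S.1 == set0) ||
  [exists R : {set asg}, (R \subset T.1) && approx_c S (R, T.2)].

Definition team_dash (T : {set (asg * system)}) : {set asg} :=
  [set p.1 | p in T].
Definition team_restr (T : {set (asg * system)}) (F : system)
  : {set (asg * system)} := [set p in T | sys_sim p.2 F].

Definition approx_g (S T : {set (asg * system)}) : bool :=
  [forall F : system, team_dash (team_restr S F) == team_dash (team_restr T F)].

Definition preceq_g (S T : {set (asg * system)}) : bool :=
  (S == set0) || [exists R : {set (asg * system)}, (R \subset T) && approx_g S R].

Definition approx_pair (p q : asg * system) : bool :=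
  (p.1 == q.1) && sys_sim p.2 q.2.

Definition classes (T : {set (asg * system)}) : {set {set (asg * system)}} :=
  [set [set q | approx_pair p q] | p in T].

Definition team_g (T : {set asg}) (F : system) : {set (asg * system)} :=
  [set (s, F) | s in T].

Section Formulas.
Variables (X0 : V) (x0 : Ran X0).

Definition fBot : form := fAnd (fEq x0) (fNeg (fEq x0)).
Definition fTop : form := fNeg fBot.

Fixpoint bigOr (l : seq form) : form :=
  match l with
  | [::] => fBot
  | [:: a] => a
  | a :: l' => fOr a (bigOr l')
  end.
Fixpoint bigAnd (l : seq form) : form :=
  match l with
  | [::] => fTop
  | [:: a] => a
  | a :: l' => fAnd a (bigAnd l')
  end.

Definition fImp (a b : form) : form := fOr (fNeg a) b.

Definition stateF (s : asg) : form := bigAnd [seq fEq (s X) | X <- enum V].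

Definition Theta (A : {set asg}) : form := bigOr [seq stateF s | s <- enum A].

(* W_X = w, where W_X lists Dom \ {X} and w is read off the assignment t *)
Definition ante (X : V) (t : asg) : seq lit :=
  [seq Tagged Ran (t Y) | Y <- [seq Y <- enum V | Y != X]].

(* eta(X): all (W = w /\ PA_X = p) []-> X = F_X(p); pairs (w,p) range over
   the restrictions of all assignments t to Dom \ {X}. *)
Definition eta (F : system) (X : V) : form :=
  match Fn F X with
  | Some f => bigAnd [seq fCf (ante X t) (fEq (f t)) | t : asg <- enum asg]
  | None => fTop
  end.

(* xi(X): all X = v -> (W_X = w []-> X = v); (v,w) <-> assignments t *)
Definition xi (X : V) : form :=
  bigAnd [seq fImp (fEq (t X)) (fCf (ante X t) (fEq (t X))) | t : asg <- enum asg].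

Definition Phi (F : system) : form :=
  bigAnd [seq (if X \in En F :\: Cn F then eta F X else xi X) | X <- enum V].

Definition chi : form :=
  fAnd (bigAnd [seq fCf (ante X t) (fDep X) | X <- enum V, t <- enum asg])
       (bigAnd [seq fDep X | X <- enum V]).

Fixpoint chik (k : nat) : form :=
  match k with
  | 0 => fBot
  | 1 => chi
  | k'.+1 => fOr chi (chik k')
  end.

(* Xi^T for a nonempty generalized causal team T with |T/~~| = k+1 *)
Definition Xi_g (T : {set (asg * system)}) : form :=
  fOr (fOr (chik (#|classes T| - 1)) (Theta (~: team_dash T)))
      (bigOr [seq fAnd (Theta [set p.1]) (Phi p.2)
             | p <- enum [set p : asg * system |
                           (p.1 \in team_dash T) && ~~ preceq_g [set p] T]]).

Definition Xi_c (T : {set asg}) (F : system) : form := Xi_g (team_g T F).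

End Formulas.
End Signature.

(* A team satisfies [chi] iff all its pairs are ~-equivalent, so by splitting it
   satisfies [chi_k] iff it has at most k ~-classes; [Theta^{s} /\ Phi^F] holds at a
   single pair iff that pair is ~ (s, F).  Hence S |= Xi^T iff S splits into a part
   with at most |T/~| - 1 classes and a part none of whose pairs is ~ to a pair of T.
   If T <= S, every class of T is met by S, necessarily in the first part, which is
   too many classes.  If T is not <= S, some class of T is missed by S, and the pairs
   of S with a ~-partner in T form a suitable first part.  Causal teams embed into
   generalized ones via T |-> T^g, preserving satisfaction and <=. *)

From Stdlib Require Import ClassicalDescription.
From mathcomp Require Import all_boot.

Set Implicit Arguments.
Unset Strict Implicit.
Unset Printing Implicit Defensive.

Lemma In_map_mem (T : eqType) (B : Type) (f : T -> B) (s : seq T) (y : B) :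
  List.In y (map f s) <-> exists2 x, x \in s & y = f x.
Proof.
elim: s => [|a s IHs] /=; first by split=> // [[]].
rewrite IHs; split.
- case=> [<-|[x xs ->]]; first by exists a; rewrite ?mem_head.
  by exists x; rewrite // in_cons xs orbT.
- by case=> x; rewrite in_cons => /predU1P[-> ->|xs ->]; [left | right; exists x].
Qed.

Lemma In_flatten (A : Type) (L : seq (seq A)) (y : A) :
  List.In y (flatten L) <-> exists2 l, List.In l L & List.In y l.
Proof.
elim: L => [|l L IHL] /=; first by split=> // [[]].
rewrite List.in_app_iff IHL; split.
- by case=> [yl|[l' l'L yl']]; [exists l; first left | exists l'; first right].
- by case=> l' [<-|l'L] yl'; [left | right; exists l'].
Qed.

Lemma set_of_prop (T : finType) (P : T -> Prop) :
  exists A : {set T}, forall x, x \in A <-> P x.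
Proof.
exists [set x | if excluded_middle_informative (P x) then true else false] => x.
by rewrite inE; case: excluded_middle_informative.
Qed.

Section Systems.
Variables (V : finType) (Ran : V -> finType).
Local Notation asg := (asg Ran).
Local Notation system := (system Ran).
Implicit Types (F G H : system) (s t : asg) (X Y W : V).

Lemma notin_PA F X : X \notin PA F X.
Proof. by case/andP: (valP F) => /andP[/andP[_ /forallP noself] _] _; apply: noself. Qed.

Lemma Fn_PA_dep F X (f : fnT Ran X) : Fn F X = Some f ->
  forall s t, (forall W, W \in PA F X -> s W = t W) -> f s = f t.
Proof.
move=> Ef s t st; case/andP: (valP F) => /andP[_ /forallP/(_ X) FX] _; move: FX.
rewrite -/(Fn F X) Ef => /forallP/(_ s)/forallP/(_ t)/implyP fst.
by apply/eqP/fst/forall_inP => W /st ->.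
Qed.

Lemma compatible_Fn s F X (f : fnT Ran X) :
  compatible s F -> Fn F X = Some f -> s X = f s.
Proof. by move=> /forallP/(_ X); rewrite /Fn => + Ef; rewrite Ef => /eqP. Qed.

(* The value of [X] after intervening to set every other variable [Y] to [t Y]
   (see [interv_ante]). *)
Definition response F s X t : Ran X := if Fn F X is Some f then f t else s X.

Lemma eq_response F s X t1 t2 : (forall Y, Y != X -> t1 Y = t2 Y) ->
  response F s X t1 = response F s X t2.
Proof.
rewrite /response; case Ef: (Fn F X) => [f|] // t12.
apply: (Fn_PA_dep Ef) => W WPA; apply: t12.
by apply: contraTneq WPA => ->; apply: notin_PA.
Qed.

Lemma response_EnCn F s s' X :
  X \in En F :\: Cn F -> response F s X = response F s' X.
Proof. by rewrite !inE /response; case: (Fn F X). Qed.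

Lemma mem_EnCn F s X : (X \in En F :\: Cn F) =
  [exists t1, exists t2, response F s X t1 != response F s X t2].
Proof.
rewrite !inE /response; case: (Fn F X) => [f|] /=.
  by rewrite andbT negb_forall; apply: eq_existsb => t1; rewrite negb_forall.
by apply/esym/existsP => -[t1 /existsP[t2]]; rewrite eqxx.
Qed.

Lemma eq_mem_EnCn F G s s' X : response F s X =1 response G s' X ->
  (X \in En F :\: Cn F) = (X \in En G :\: Cn G).
Proof.
move=> FG; rewrite (mem_EnCn F s) (mem_EnCn G s').
by apply: eq_existsb => t1; apply: eq_existsb => t2; rewrite !FG.
Qed.

Lemma response_out F s X t : compatible s F -> X \notin En F :\: Cn F ->
  response F s X t = s X.
Proof.
move=> sF; rewrite (mem_EnCn F s) negb_exists => /forallP/(_ t).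
rewrite negb_exists => /forallP/(_ s)/negPn/eqP ->; rewrite /response.
by case Ef: (Fn F X) => [f|] //; rewrite (compatible_Fn sF Ef).
Qed.

Lemma fn_simE F G X : fn_sim X F G <->
  exists f g, [/\ Fn F X = Some f, Fn G X = Some g & f =1 g].
Proof.
rewrite /fn_sim; case Ef: (Fn F X) => [f|]; last by split=> // -[f [g []]].
case Eg: (Fn G X) => [g|]; last by split=> // -[f' [g' []]].
split=> [/forallP fg | [_ [_ [[<-] [<-] fg]]]].
  exists f, g; split=> // t; apply/eqP.
  by move: (fg t) => /forallP/(_ t)/implyP; apply; apply/forall_inP.
apply/forallP => s; apply/forallP => t; apply/implyP => /forall_inP st.
pose m : asg := finfun (fun W => if W \in PA F X then s W else t W).
rewrite (Fn_PA_dep (s:=s) (t:=m) Ef) => [|W WF]; last by rewrite ffunE WF.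
rewrite fg; apply/eqP/(Fn_PA_dep Eg) => W WG; rewrite ffunE; case: ifP => // WF.
by apply/eqP/st; rewrite inE WF.
Qed.

Lemma sys_simE F G : sys_sim F G <->
  En F :\: Cn F = En G :\: Cn G /\
  (forall X, X \in En F :\: Cn F -> forall s s', response F s X =1 response G s' X).
Proof.
rewrite /sys_sim; split=> [/andP[/eqP EFG /forall_inP sim] | [EFG sim]].
  split=> // X /sim/fn_simE[f [g [Ef Eg fg]]] s s' t.
  by rewrite /response Ef Eg.
apply/andP; split; first exact/eqP.
apply/forall_inP => X XF; have XG : X \in En G :\: Cn G by rewrite -EFG.
move: (sim X XF) (XF) XG; rewrite /response !inE.
case Ef: (Fn F X) => [f|]; case Eg: (Fn G X) => [g|] //= fg _ _.
by apply/fn_simE; exists f, g; split=> // t; apply: (fg t t).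
Qed.

Lemma sys_sim_refl F : sys_sim F F.
Proof.
by apply/sys_simE; split=> // X XF s s' t; rewrite (response_EnCn s s' XF).
Qed.

Lemma sys_sim_sym F G : sys_sim F G -> sys_sim G F.
Proof.
move=> /sys_simE[EFG sim]; apply/sys_simE; split=> // X.
by rewrite -EFG => XF s s' t; rewrite (sim X XF s' s t).
Qed.

Lemma sys_sim_trans F G H : sys_sim F G -> sys_sim G H -> sys_sim F H.
Proof.
move=> /sys_simE[EFG simFG] /sys_simE[EGH simGH].
apply/sys_simE; split=> [|X XF s s' t]; first by rewrite EFG.
by rewrite (simFG X XF s s' t) (simGH X _ s' s') // -EFG.
Qed.

Lemma sys_sim_response s F G : compatible s F -> compatible s G ->
  (forall X, response F s X =1 response G s X) <-> sys_sim F G.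
Proof.
move=> sF sG; rewrite sys_simE; split=> [resp | [EFG sim] X t].
  have EFG : En F :\: Cn F = En G :\: Cn G by apply/setP => X; apply: eq_mem_EnCn.
  split=> // X XF s1 s2 t; have XG : X \in En G :\: Cn G by rewrite -EFG.
  by rewrite (response_EnCn s1 s XF) (response_EnCn s2 s XG) resp.
have [XF|XF] := boolP (X \in En F :\: Cn F); first exact: sim.
by rewrite !response_out // -EFG.
Qed.

Definition upd t X (v : Ran X) : asg := finfun (dfwith t v).

Lemma upd_same t X (v : Ran X) : upd t v X = v.
Proof. by rewrite ffunE dfwith_in. Qed.

Lemma upd_other t X (v : Ran X) Y : Y != X -> upd t v Y = t Y.
Proof. by move=> YX; rewrite ffunE dfwith_out // eq_sym. Qed.

Lemma notin_EnCn_response s G X :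
  (forall t, t X = s X -> response G s X t = t X) -> X \notin En G :\: Cn G.
Proof.
move=> fixed; have const t : response G s X t = s X.
  rewrite (@eq_response G s X t (upd t (s X))) => [|Y YX]; last by rewrite upd_other.
  by rewrite fixed upd_same.
rewrite (mem_EnCn G s) negb_exists; apply/forallP => t1.
by rewrite negb_exists; apply/forallP => t2; rewrite !const eqxx.
Qed.

(* The constraints that [Phi F] imposes on a single pair [(s, G)]. *)
Lemma sys_sim_at s G F : compatible s G ->
  sys_sim G F <-> forall X, if X \in En F :\: Cn F then response G s X =1 response F s X
                            else forall t, t X = s X -> response G s X t = t X.
Proof.
move=> sG; split=> [/sys_simE[EGF sim] X | loc].
  case: ifP => XF; first by move=> t; apply: sim; rewrite EGF.
  by move=> t ->; rewrite response_out // EGF XF.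
have EGF : En G :\: Cn G = En F :\: Cn F.
  apply/setP => X; have := loc X; case: ifP => XF; first by rewrite -XF; apply: eq_mem_EnCn.
  by move/notin_EnCn_response/negbTE.
apply/sys_simE; split=> // X XG s1 s2 t.
have := loc X; rewrite -EGF XG => resp.
have XF : X \in En F :\: Cn F by rewrite -EGF.
by rewrite (response_EnCn s1 s XG) (response_EnCn s2 s XF) resp.
Qed.

Lemma approx_refl (p : asg * system) : approx_pair p p.
Proof. by rewrite /approx_pair eqxx sys_sim_refl. Qed.

Lemma approx_sym (p q : asg * system) : approx_pair p q -> approx_pair q p.
Proof. by rewrite /approx_pair eq_sym => /andP[-> /sys_sim_sym->]. Qed.

Lemma approx_trans (p q r : asg * system) :
  approx_pair p q -> approx_pair q r -> approx_pair p r.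
Proof.
rewrite /approx_pair => /andP[/eqP-> pq] /andP[/eqP-> qr].
by rewrite eqxx (sys_sim_trans pq qr).
Qed.

Lemma mem_ivars_ante X t Y : (Y \in ivars (ante X t)) = (Y != X).
Proof.
by rewrite /ivars /ante -map_comp (@eq_map _ _ _ id) // map_id mem_filter mem_enum andbT.
Qed.

Lemma consistent_ante X t : consistent (ante X t).
Proof.
apply/allP => _ /mapP[Y _ ->]; apply/allP => _ /mapP[Z _ ->] /=.
by apply/implyP => /eqP YZ; subst Z.
Qed.

Lemma interv_ante F s X t : interv_s F (ante X t) s X = response F s X t.
Proof.
have ante_off t' : all (fun p => Tagged Ran (t' (tag p)) == p) (ante X t) ->
    forall Y, Y != X -> t' Y = t Y.
  move=> /allP fix_t Y YX; apply/eqP.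
  have /fix_t : Tagged Ran (t Y) \in ante X t.
    by apply/mapP; exists Y; rewrite // mem_filter YX mem_enum.
  by rewrite eq_Tagged.
rewrite /interv_s; case: pickP => [t' /andP[/ante_off t't /forallP/(_ X)] | none].
  by rewrite mem_ivars_ante eqxx => /eqP->; apply: eq_response.
have /negP[] := none (upd t (response F s X t)); apply/andP; split.
  apply/allP => p /mapP[Y]; rewrite mem_filter => /andP[YX _] -> /=.
  by rewrite upd_other.
apply/forallP => Y; rewrite mem_ivars_ante negbK; apply/implyP => /eqP->.
rewrite upd_same -/(response F s X _) (@eq_response F s X _ t) // => Z ZX.
by rewrite upd_other.
Qed.

End Systems.

Section Flat.
Variables (V : finType) (Ran : V -> finType) (X0 : V) (x0 : Ran X0).
Local Notation asg := (asg Ran).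
Local Notation system := (system Ran).
Local Notation form := (form Ran).
Local Notation team := {set asg * system}.
Implicit Types (U : team) (p q : asg * system) (phi psi : form).

Definition flat phi := forall U, sat_g U phi <-> forall p, p \in U -> sat_g [set p] phi.

Lemma sat1_Eq p X (v : Ran X) : sat_g [set p] (fEq v) <-> p.1 X = v.
Proof. by split=> [/(_ p (set11 p)) | pv q /set1P->]. Qed.

Lemma sat1_Neg p phi : sat_g [set p] (fNeg phi) <-> ~ sat_g [set p] phi.
Proof. by split=> [/(_ p (set11 p)) | np q /set1P->]. Qed.

Lemma flat_Eq X (v : Ran X) : flat (fEq v).
Proof. by move=> U; split=> sat p /sat /sat1_Eq. Qed.

Lemma flat_Neg phi : flat (fNeg phi).
Proof. by move=> U; split=> sat p /sat /sat1_Neg. Qed.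

Lemma flat_And phi psi : flat phi -> flat psi -> flat (fAnd phi psi).
Proof.
move=> fphi fpsi U /=; rewrite fphi fpsi.
split=> [[sphi spsi] p pU | sat]; first by split; [apply: sphi | apply: spsi].
by split=> p /sat[].
Qed.

Lemma flat_Cf A phi : flat phi -> flat (fCf A phi).
Proof.
move=> fphi U /=; have [_|_] := boolP (consistent A); last by split=> *; left.
split=> [[//|/fphi sat] p pU | sat]; right.
  by rewrite imset_set1; apply: sat; apply: imset_f.
by apply/fphi => _ /imsetP[p pU ->]; case: (sat p pU) => //; rewrite imset_set1.
Qed.

Lemma sat_Or_flat phi psi U : flat phi -> flat psi ->
  sat_g U (fOr phi psi) <->
  forall p, p \in U -> sat_g [set p] phi \/ sat_g [set p] psi.
Proof.
move=> fphi fpsi /=; split=> [[U1 [U2 [<- [/fphi s1 /fpsi s2]]]] p | sat].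
  by case/setUP=> [/s1|/s2]; [left|right].
have [U1 U1P] := set_of_prop (fun p => p \in U /\ sat_g [set p] phi).
have [U2 U2P] := set_of_prop (fun p => p \in U /\ sat_g [set p] psi).
exists U1, U2; split; last by split; [apply/fphi => p /U1P[] | apply/fpsi => p /U2P[]].
apply/setP => p; apply/setUP/idP => [[/U1P[] | /U2P[]] // | pU].
by case: (sat p pU) => sp; [left; apply/U1P | right; apply/U2P].
Qed.

Lemma flat_Or phi psi : flat phi -> flat psi -> flat (fOr phi psi).
Proof.
move=> fphi fpsi U; rewrite sat_Or_flat //; split=> [sat p pU | sat p pU].
  by apply/sat_Or_flat => // q /set1P->; apply: sat.
by have /sat_Or_flat := sat p pU; apply=> //; rewrite inE.
Qed.

Lemma sat_bot U : sat_g U (fBot x0) <-> U = set0.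
Proof.
split=> [[eq0 neq0] | ->]; last by split=> p; rewrite inE.
by apply/setP => p; rewrite inE; apply/negP => pU; apply: (neq0 p pU); apply/sat1_Eq/eq0.
Qed.

Lemma sat_top U : sat_g U (fTop x0).
Proof. by move=> p _ /sat_bot/setP/(_ p); rewrite !inE eqxx. Qed.

Lemma sat_bigAnd U l :
  sat_g U (bigAnd x0 l) <-> forall phi, List.In phi l -> sat_g U phi.
Proof.
elim: l => [|phi [|psi l] IHl]; first by split=> // _; apply: sat_top.
  by split=> [sphi _ [<-|[]] | ]; last by apply; left.
rewrite [sat_g _ _]/= IHl; split=> [[sphi sl] chi [<-|] | sat] //; first exact: sl.
by split=> [|chi lchi]; apply: sat; [left | right].
Qed.

Lemma flat_bigAnd l : (forall phi, List.In phi l -> flat phi) -> flat (bigAnd x0 l).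
Proof.
move=> fl U; rewrite sat_bigAnd; split=> [sat p pU | sat phi lphi].
  by apply/sat_bigAnd => phi lphi; move/(fl phi lphi): (sat phi lphi); apply.
by apply/(fl phi lphi) => p /sat/sat_bigAnd; apply.
Qed.

Lemma flat_bigOr l : (forall phi, List.In phi l -> flat phi) -> flat (bigOr x0 l).
Proof.
elim: l => [|phi [|psi l] IHl] fl.
- by apply: flat_And; [apply: flat_Eq | apply: flat_Neg].
- by apply: fl; left.
- by apply: flat_Or; [apply: fl; left | apply: IHl => chi lchi; apply: fl; right].
Qed.

Lemma sat1_bigOr l p : (forall phi, List.In phi l -> flat phi) ->
  sat_g [set p] (bigOr x0 l) <-> exists2 phi, List.In phi l & sat_g [set p] phi.
Proof.
elim: l => [|phi [|psi l] IHl] fl.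
- by split=> [/sat_bot/setP/(_ p)|[? []]]; rewrite !inE eqxx.
- by split=> [sphi|[_ [<-|[]]]//]; exists phi => //; left.
have fphi : flat phi by apply: fl; left.
have fl' chi : List.In chi (psi :: l) -> flat chi by move=> lchi; apply: fl; right.
rewrite [bigOr _ _]/= (sat_Or_flat _ fphi (flat_bigOr fl')).
split=> [/(_ p (set11 p))[sphi|/IHl[]// chi lchi schi] | [chi [<-|lchi] schi] q /set1P->].
- by exists phi => //; left.
- by exists chi => //; right.
- by left.
- by right; apply/IHl => //; exists chi.
Qed.

Lemma sat_bigOr U l : (forall phi, List.In phi l -> flat phi) ->
  sat_g U (bigOr x0 l) <->
  forall p, p \in U -> exists2 phi, List.In phi l & sat_g [set p] phi.
Proof.
by move=> fl; rewrite flat_bigOr //; split=> sat p /sat/sat1_bigOr; apply.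
Qed.

End Flat.

Section CharacteristicFormulas.
Variables (V : finType) (Ran : V -> finType) (X0 : V) (x0 : Ran X0).
Local Notation asg := (asg Ran).
Local Notation system := (system Ran).
Local Notation team := {set asg * system}.
Implicit Types (S T U W : team) (p q r : asg * system) (s t : asg) (F G : system) (X : V).

Lemma flat_stateF s : flat (stateF x0 s).
Proof. by apply: flat_bigAnd => _ /In_map_mem[X _ ->]; apply: flat_Eq. Qed.

Lemma sat1_stateF p s : sat_g [set p] (stateF x0 s) <-> p.1 = s.
Proof.
rewrite sat_bigAnd; split=> [sat | ps _ /In_map_mem[X _ ->]].
  by apply/ffunP => X; apply/sat1_Eq/sat/In_map_mem; exists X; rewrite ?mem_enum.
by apply/sat1_Eq; rewrite ps.
Qed.

Lemma flat_Theta A : flat (Theta x0 A).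
Proof. by apply: flat_bigOr => _ /In_map_mem[s _ ->]; apply: flat_stateF. Qed.

Lemma sat1_Theta p A : sat_g [set p] (Theta x0 A) <-> p.1 \in A.
Proof.
rewrite sat1_bigOr => [|_ /In_map_mem[s _ ->]]; last exact: flat_stateF.
split=> [[_ /In_map_mem[s sA ->] /sat1_stateF->] | pA]; first by rewrite -mem_enum.
exists (stateF x0 p.1); last exact/sat1_stateF.
by apply/In_map_mem; exists p.1; rewrite ?mem_enum.
Qed.

Lemma sat_Theta U A : sat_g U (Theta x0 A) <-> forall p, p \in U -> p.1 \in A.
Proof. by rewrite flat_Theta; split=> sat p /sat/sat1_Theta. Qed.

Lemma sat1_Cf_Eq p X t (v : Ran X) :
  sat_g [set p] (fCf (ante X t) (fEq v)) <-> response p.2 p.1 X t = v.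
Proof.
rewrite /= consistent_ante imset_set1; split=> [[//|/(_ _ (set11 _))] | resp].
  by rewrite /= interv_ante.
by right=> q /set1P->; rewrite /= interv_ante.
Qed.

Lemma sat_Cf_Dep U X t : sat_g U (fCf (ante X t) (fDep Ran X)) <->
  {in U &, forall p q, response p.2 p.1 X t = response q.2 q.1 X t}.
Proof.
rewrite /= consistent_ante /=; split=> [[//|sat] p q pU qU | sat].
  by rewrite -!interv_ante; apply: (sat _ _ (imset_f _ pU) (imset_f _ qU)).
by right=> _ _ /imsetP[p pU ->] /imsetP[q qU ->] /=; rewrite !interv_ante; apply: sat.
Qed.

Lemma flat_Cf_Eq X t (v : Ran X) : flat (fCf (ante X t) (fEq v)).
Proof. exact/flat_Cf/flat_Eq. Qed.

Lemma flat_eta F X : flat (eta x0 F X).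
Proof.
rewrite /eta; case: (Fn F X) => [f|]; last exact: flat_Neg.
by apply: flat_bigAnd => _ /In_map_mem[t _ ->]; apply: flat_Cf_Eq.
Qed.

Lemma sat1_eta p F X (f : fnT Ran X) : Fn F X = Some f ->
  sat_g [set p] (eta x0 F X) <-> response p.2 p.1 X =1 f.
Proof.
move=> Ef; rewrite /eta Ef sat_bigAnd.
split=> [sat t | resp _ /In_map_mem[t _ ->]]; last exact/sat1_Cf_Eq.
by apply/sat1_Cf_Eq/sat/In_map_mem; exists t; rewrite ?mem_enum.
Qed.

Lemma flat_xi X : flat (xi x0 X).
Proof.
apply: flat_bigAnd => _ /In_map_mem[t _ ->].
by apply: flat_Or; [apply: flat_Neg | apply: flat_Cf_Eq].
Qed.

Lemma sat1_xi p X :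
  sat_g [set p] (xi x0 X) <-> forall t, t X = p.1 X -> response p.2 p.1 X t = t X.
Proof.
have sat1_imp t : sat_g [set p] (fImp (fEq (t X)) (fCf (ante X t) (fEq (t X)))) <->
    (t X = p.1 X -> response p.2 p.1 X t = t X).
  rewrite (sat_Or_flat _ (flat_Neg _) (flat_Cf_Eq _ _)).
  split=> [/(_ p (set11 p))[/sat1_Neg nEq tX | /sat1_Cf_Eq //] | imp q /set1P->].
    by case: nEq; apply/sat1_Eq; rewrite tX.
  have [tX|ntX] := eqVneq (t X) (p.1 X); first by right; apply/sat1_Cf_Eq/imp.
  by left; apply/sat1_Neg => /sat1_Eq pX; rewrite pX eqxx in ntX.
rewrite sat_bigAnd; split=> [sat t | resp _ /In_map_mem[t _ ->]]; last exact/sat1_imp/resp.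
by apply/sat1_imp/sat/In_map_mem; exists t; rewrite ?mem_enum.
Qed.

Lemma flat_Phi F : flat (Phi x0 F).
Proof.
apply: flat_bigAnd => _ /In_map_mem[X _ ->].
by case: ifP => _; [apply: flat_eta | apply: flat_xi].
Qed.

Lemma sat1_Phi s G F : compatible s G ->
  sat_g [set (s, G)] (Phi x0 F) <-> sys_sim G F.
Proof.
move=> sG; rewrite (sys_sim_at F sG) /Phi sat_bigAnd.
have sat1_at X :
    sat_g [set (s, G)] (if X \in En F :\: Cn F then eta x0 F X else xi x0 X) <->
    if X \in En F :\: Cn F then response G s X =1 response F s X
    else forall t, t X = s X -> response G s X t = t X.
  case: ifP => XF; last exact: sat1_xi.
  move: XF; rewrite !inE; case Ef: (Fn F X) => [f|] // _.
  by rewrite (sat1_eta _ Ef) [response F s X]/response Ef.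
split=> [sat X | loc _ /In_map_mem[X _ ->]]; last exact/sat1_at/loc.
by apply/sat1_at/sat/In_map_mem; exists X; rewrite ?mem_enum.
Qed.

Lemma compatible_g_sub U U' : compatible_g U -> U' \subset U -> compatible_g U'.
Proof. by move=> /forall_inP cU /subsetP sub; apply/forall_inP => p /sub/cU. Qed.

Lemma sat_chi U : compatible_g U ->
  sat_g U (chi x0) <-> {in U &, forall p q, approx_pair p q}.
Proof.
move=> /forall_inP cU; rewrite [sat_g _ _]/= !sat_bigAnd.
have In_resp X t : List.In (fCf (ante X t) (fDep Ran X))
    [seq fCf (ante X t) (fDep Ran X) | X <- enum V, t <- enum asg].
  apply/In_flatten; exists [seq fCf (ante X t) (fDep Ran X) | t <- enum asg].
    by apply/In_map_mem; exists X; rewrite ?mem_enum.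
  by apply/In_map_mem; exists t; rewrite ?mem_enum.
split=> [[resp dep] [s F] [s' G] pU qU | approx].
  have ss' : s = s'.
    apply/ffunP => X; apply: (dep (fDep Ran X)) pU qU.
    by apply/In_map_mem; exists X; rewrite ?mem_enum.
  subst s'; rewrite /approx_pair eqxx -(sys_sim_response (cU _ pU) (cU _ qU)) => X t.
  by have /sat_Cf_Dep := resp _ (In_resp X t); apply.
split=> [_ /In_flatten[_ /In_map_mem[X _ ->] /In_map_mem[t _ ->]] |
         _ /In_map_mem[X _ ->] p q pU qU].
  apply/sat_Cf_Dep => -[s F] [s' G] pU qU /=.
  have /andP[/eqP/= ss' FG] := approx _ _ pU qU; subst s'.
  by move: FG; rewrite -(sys_sim_response (cU _ pU) (cU _ qU)); apply.
by have /andP[/eqP-> _] := approx _ _ pU qU.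
Qed.

Definition approx_class p : {set asg * system} := [set q | approx_pair p q].

Lemma eq_approx_class p q : approx_class p = approx_class q <-> approx_pair p q.
Proof.
split=> [pq | pq].
  have : q \in approx_class q by rewrite inE approx_refl.
  by rewrite -pq inE.
apply: eq_finset => r; apply/idP/idP; first exact: approx_trans (approx_sym pq).
exact: approx_trans pq.
Qed.

Lemma card_classes_le1 U :
  #|classes U| <= 1 <-> {in U &, forall p q, approx_pair p q}.
Proof.
split=> [/card_le1_eqP eqc p q pU qU | approx].
  by apply/eq_approx_class/eqc; apply: imset_f.
apply/card_le1_eqP => _ _ /imsetP[p pU ->] /imsetP[q qU ->].
exact/eq_approx_class/approx.
Qed.

Lemma card_classes_lt U W p : p \in W -> classes U \subset classes W ->
  {in U, forall q, ~~ approx_pair p q} -> #|classes U| < #|classes W|.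
Proof.
move=> pW UW npU; apply/proper_card/properP; split=> //.
exists (approx_class p); first exact: imset_f.
by apply/imsetP => -[q qU /eq_approx_class]; apply/negP/npU.
Qed.

Lemma sat_chik k U : compatible_g U -> sat_g U (chik x0 k) <-> #|classes U| <= k.
Proof.
elim: k U => [|[|k] IHk] U cU.
- by rewrite sat_bot leqn0 cards_eq0 imset_eq0; split=> [->|/eqP].
- by rewrite sat_chi // card_classes_le1.
split=> [[U1 [U2 [defU [sat1 sat2]]]] | le].
  have cU1 : compatible_g U1 by apply: compatible_g_sub cU _; rewrite -defU subsetUl.
  have cU2 : compatible_g U2 by apply: compatible_g_sub cU _; rewrite -defU subsetUr.
  move/(sat_chi cU1)/card_classes_le1: sat1 => le1; move/(IHk _ cU2): sat2 => le2.
  rewrite -defU /classes imsetU cardsU; apply: leq_trans (leq_subr _ _) _.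
  by rewrite -add1n leq_add.
have [U0|[p pU]] := set_0Vmem U.
  have c0 : compatible_g (set0 : team) by rewrite -U0.
  exists set0, set0; rewrite setU0 U0; split=> //; split.
    by apply/(sat_chi c0) => ? ?; rewrite inE.
  by apply/(IHk _ c0); rewrite /classes imset0 cards0.
set U1 := [set q in U | approx_pair p q]; set U2 := [set q in U | ~~ approx_pair p q].
have cU1 : compatible_g U1 by apply: compatible_g_sub cU _; apply/subsetP => q /setIdP[].
have cU2 : compatible_g U2 by apply: compatible_g_sub cU _; apply/subsetP => q /setIdP[].
exists U1, U2; split; first by apply/setP => q; rewrite !inE -andb_orr orbN andbT.
split.
  apply/(sat_chi cU1) => q r /setIdP[_ pq] /setIdP[_ pr].
  exact: approx_trans (approx_sym pq) pr.
apply/(IHk _ cU2); rewrite -ltnS; apply: leq_trans le; apply: (card_classes_lt pU).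
  by apply: imsetS; apply/subsetP => q /setIdP[].
by move=> q /setIdP[].
Qed.

Lemma preceqP T S :
  reflect (forall p, p \in T -> exists2 q, q \in S & approx_pair p q) (preceq_g T S).
Proof.
apply: (iffP orP) => [[/eqP-> p | /existsP[R /andP[RS /forallP sameR]]] | matched].
- by rewrite inE.
- move=> [s F] pT.
  have : s \in team_dash (team_restr T F).
    by apply/imsetP; exists (s, F); rewrite // inE pT sys_sim_refl.
  rewrite (eqP (sameR F)) => /imsetP[q /setIdP[qR qF] ->].
  by exists q; [apply: (subsetP RS) | rewrite /approx_pair eqxx sys_sim_sym].
right; apply/existsP; exists [set q in S | [exists p in T, approx_pair p q]].
apply/andP; split; first by apply/subsetP => q /setIdP[].
apply/forallP => F; apply/eqP/setP => s; apply/imsetP/imsetP => -[p].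
  rewrite inE => /andP[pT pF] ->; have [q qS /andP[/eqP pq pq']] := matched p pT.
  exists q => //; rewrite !inE qS (sys_sim_trans (sys_sim_sym pq') pF) andbT.
  by apply/exists_inP; exists p; rewrite // /approx_pair pq eqxx.
rewrite !inE => /andP[/andP[pS /exists_inP[q qT /andP[/eqP qp qp']]] pF] ->.
by exists q; rewrite // inE qT (sys_sim_trans qp' pF).
Qed.

Lemma preceq1P p T : reflect (exists2 r, r \in T & approx_pair p r) (preceq_g [set p] T).
Proof.
apply: (iffP (preceqP _ _)) => [/(_ p (set11 p)) // | [r rT pr] q /set1P->].
by exists r.
Qed.

Definition unmatched_form T : form Ran :=
  bigOr x0 [seq fAnd (Theta x0 [set p.1]) (Phi x0 p.2)
           | p <- enum [set p : asg * system |
                        (p.1 \in team_dash T) && ~~ preceq_g [set p] T]].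

Lemma sat_unmatched T U : compatible_g U ->
  sat_g U (unmatched_form T) <->
  forall q, q \in U -> q.1 \in team_dash T /\ forall r, r \in T -> ~~ approx_pair q r.
Proof.
move=> /forall_inP cU; rewrite sat_bigOr => [|_ /In_map_mem[p _ ->]]; last first.
  by apply: flat_And; [apply: flat_Theta | apply: flat_Phi].
have sat1_pair s G p : compatible s G ->
    sat_g [set (s, G)] (fAnd (Theta x0 [set p.1]) (Phi x0 p.2)) <-> approx_pair (s, G) p.
  move=> sG; rewrite /approx_pair /=; split=> [[/sat1_Theta] | /andP[/eqP sp Gp]].
    by rewrite inE => -> /(sat1_Phi _ sG) ->.
  by split; [apply/sat1_Theta; rewrite inE sp | apply/(sat1_Phi _ sG)].
split=> [sat [s G] qU | unm [s G] qU].
  have [_ /In_map_mem[p] + -> /(sat1_pair _ _ _ (cU _ qU)) qp] := sat _ qU.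
  rewrite mem_enum inE => /andP[pT /negP npT]; split; first by case/andP: qp => /eqP->.
  move=> r rT; apply/negP => qr; apply: npT; apply/preceq1P; exists r; first done.
  exact: approx_trans (approx_sym qp) qr.
have [sT nq] := unm _ qU; exists (fAnd (Theta x0 [set s]) (Phi x0 G)).
  apply/In_map_mem; exists (s, G) => //; rewrite mem_enum inE sT /=.
  by apply/negP => /preceq1P[r rT]; apply/negP/nq.
exact/(sat1_pair _ _ (s, G) (cU _ qU))/approx_refl.
Qed.

(* A pair with a ~-partner in T has its assignment in [team_dash T], so the [Theta]
   disjunct and the unmatched one together say that no pair has a partner in T. *)
Lemma sat_Xi_g T U : compatible_g U ->
  sat_g U (Xi_g x0 T) <->
  exists U1 U2, [/\ U1 :|: U2 = U, #|classes U1| <= #|classes T| - 1 &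
                    forall q, q \in U2 -> forall r, r \in T -> ~~ approx_pair q r].
Proof.
move=> cU; rewrite -/(unmatched_form T).
split=> [[U12 [U3 [defU [[U1 [U2 [defU12 [sat1 /sat_Theta out]]]] sat3]]]] | ].
  have cU1 : compatible_g U1.
    by apply: compatible_g_sub cU _; rewrite -defU -defU12 -setUA subsetUl.
  have cU3 : compatible_g U3 by apply: compatible_g_sub cU _; rewrite -defU subsetUr.
  move/(sat_chik _ cU1): sat1 => le; move/(sat_unmatched _ cU3): sat3 => unm.
  exists U1, (U2 :|: U3); split=> //; first by rewrite setUA defU12.
  move=> q /setUP[/out | /unm[_ //]] qT r rT.
  by apply: contraTN qT => /andP[/eqP-> _]; rewrite in_setC negbK; apply: imset_f.
move=> [U1 [U2 [defU le unm]]].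
have cU1 : compatible_g U1 by apply: compatible_g_sub cU _; rewrite -defU subsetUl.
have cU2 : compatible_g U2 by apply: compatible_g_sub cU _; rewrite -defU subsetUr.
exists (U1 :|: [set q in U2 | q.1 \notin team_dash T]), [set q in U2 | q.1 \in team_dash T].
split.
  apply/setP => q; rewrite -defU !inE.
  by case: (q.1 \in team_dash T); rewrite ?andbT ?andbF ?orbF.
split.
  exists U1, [set q in U2 | q.1 \notin team_dash T]; split=> //.
  split; first exact/(sat_chik _ cU1).
  by apply/sat_Theta => q /setIdP[_]; rewrite in_setC.
apply/sat_unmatched; first by apply: compatible_g_sub cU2 _; apply/subsetP => q /setIdP[].
by move=> q /setIdP[qU2 qT]; split=> // r rT; apply: unm.
Qed.

Lemma sat_Xi_gP T S : compatible_g S -> T != set0 ->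
  sat_g S (Xi_g x0 T) <-> ~~ preceq_g T S.
Proof.
move=> cS /set0Pn[p0 p0T]; rewrite sat_Xi_g //.
have T0 : 0 < #|classes T|.
  by rewrite card_gt0; apply/set0Pn; exists (approx_class p0); apply: imset_f.
split=> [[U1 [U2 [defS le unm]]] | npre].
  apply/negP => /preceqP pre.
  have TU1 : classes T \subset classes U1.
    apply/subsetP => _ /imsetP[p pT ->]; have [q qS pq] := pre p pT.
    move: qS; rewrite -defS => /setUP[qU1 | /unm/(_ p pT)/negP[]]; last exact: approx_sym.
    by apply/imsetP; exists q; [|apply/eq_approx_class].
  by have := leq_trans (subset_leq_card TU1) le; rewrite subn1 leqNgt ltn_predL T0.
have /exists_inP[p pT /forall_inP unmatched] :
    [exists p in T, [forall q in S, ~~ approx_pair p q]].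
  apply: contraR npre; rewrite negb_exists_in => /forall_inP matched.
  apply/preceqP => p /matched; rewrite negb_forall_in => /exists_inP[q qS /negPn pq].
  by exists q.
set U1 := [set q in S | [exists r in T, approx_pair r q]].
exists U1, [set q in S | ~~ [exists r in T, approx_pair r q]]; split.
- by apply/setP => q; rewrite !inE -andb_orr orbN andbT.
- rewrite subn1 -ltnS (ltn_predK T0); apply: (card_classes_lt pT).
    apply/subsetP => _ /imsetP[q /setIdP[_ /exists_inP[r rT rq]] ->].
    by apply/imsetP; exists r; [|apply/eq_approx_class/approx_sym].
  by move=> q /setIdP[qS _]; apply: unmatched.
- move=> q /setIdP[_ nomatch] r rT; apply: contra nomatch => qr.
  by apply/exists_inP; exists r; [|apply: approx_sym].
Qed.

End CharacteristicFormulas.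

Section CausalTeams.
Variables (V : finType) (Ran : V -> finType).
Local Notation asg := (asg Ran).
Local Notation system := (system Ran).
Implicit Types (S T : {set asg}) (F G : system).

Lemma mem_team_g T F (p : asg * system) : (p \in team_g T F) = (p.2 == F) && (p.1 \in T).
Proof.
apply/imsetP/andP => [[s sT ->] | [/eqP pF pT]]; first by rewrite eqxx.
by exists p.1; rewrite // -pF -surjective_pairing.
Qed.

Lemma team_g_sub T F (U : {set asg * system}) :
  U \subset team_g T F -> U = team_g [set s | (s, F) \in U] F.
Proof.
move=> /subsetP UT; apply/setP => p; rewrite mem_team_g inE.
apply/idP/andP => [pU | [/eqP <-]]; last by rewrite -surjective_pairing.
by have := UT p pU; rewrite mem_team_g => /andP[/eqP pF _]; rewrite -pF -surjective_pairing.
Qed.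

Lemma team_g1 s F : team_g [set s] F = [set (s, F)].
Proof. exact: imset_set1. Qed.

Lemma sat_c_team_g phi F T : sat_c F T phi <-> sat_g (team_g T F) phi.
Proof.
elim: phi F T => [X x | X | phi IH | phi IHphi psi IHpsi | phi IHphi psi IHpsi | A phi IH]
  F T /=.
- split=> [sat p | sat s sT]; first by rewrite mem_team_g => /andP[_ /sat].
  by apply: (sat (s, F)); rewrite mem_team_g eqxx.
- split=> [sat p q | sat s s' sT s'T].
    by rewrite !mem_team_g => /andP[_ /sat] + /andP[_]; apply.
  by apply: (sat (s, F) (s', F)); rewrite mem_team_g eqxx.
- split=> [sat [s G] | sat s sT].
    by rewrite mem_team_g => /andP[/eqP/= -> /sat]; rewrite IH team_g1.
  by rewrite IH team_g1; apply: sat; rewrite mem_team_g eqxx.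
- by rewrite IHphi IHpsi.
- split=> [[T1 [T2 [defT [sat1 sat2]]]] | [U1 [U2 [defU [sat1 sat2]]]]].
    by exists (team_g T1 F), (team_g T2 F); rewrite -IHphi -IHpsi /team_g -imsetU defT.
  have sub1 : U1 \subset team_g T F by rewrite -defU subsetUl.
  have sub2 : U2 \subset team_g T F by rewrite -defU subsetUr.
  rewrite (team_g_sub sub1) -IHphi in sat1; rewrite (team_g_sub sub2) -IHpsi in sat2.
  exists [set s | (s, F) \in U1], [set s | (s, F) \in U2]; split=> //.
  by apply/setP => s; rewrite !inE -in_setU defU mem_team_g eqxx.
- by rewrite IH /team_g -!imset_comp.
Qed.

Lemma preceq_c_team_g T S TF SF : T != set0 ->
  preceq_c (T, TF) (S, SF) = preceq_g (team_g T TF) (team_g S SF).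
Proof.
move=> nT; apply/idP/preceqP => [/orP[/eqP/= T0 | /existsP[R /andP[RS]]] | matched].
- by rewrite T0 eqxx in nT.
- rewrite /approx_c /= => /andP[/andP[_ /eqP TR] TS] p.
  rewrite mem_team_g => /andP[/eqP pTF pT]; exists (p.1, SF).
    by rewrite mem_team_g eqxx (subsetP RS) // -TR.
  by rewrite /approx_pair eqxx pTF.
have [s0 s0T] := set0Pn _ nT.
have [q0 /[!mem_team_g] /andP[/eqP q0SF _] /andP[_ TS]] := matched _ (imset_f _ s0T).
apply/orP; right; apply/existsP; exists T.
rewrite /approx_c /= nT eqxx -q0SF TS !andbT; apply/subsetP => s sT.
have [q /[!mem_team_g] /andP[_ qS] /andP[/eqP/= -> _]] := matched _ (imset_f _ sT).
exact: qS.
Qed.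

Lemma compatible_team_g T F : compatible_c F T = compatible_g (team_g T F).
Proof.
apply/forall_inP/forall_inP => [cT p | cT s sT]; last exact: (cT (s, F) (imset_f _ sT)).
by rewrite mem_team_g => /andP[/eqP-> /cT].
Qed.

End CausalTeams.

Theorem lemma5p5 (V : finType) (Ran : V -> finType) (X0 : V) (x0 : Ran X0)
  (HRan : forall X : V, 0 < #|Ran X|) :
  (* causal teams S = (S^-, SF), T = (T^-, TF), T nonempty *)
  (forall (SF TF : system Ran) (S T : {set asg Ran}),
      compatible_c SF S -> compatible_c TF T -> T != set0 ->
      (sat_c SF S (Xi_c x0 T TF) <-> ~~ preceq_c (T, TF) (S, SF)))
  /\
  (* generalized causal teams, T nonempty *)
  (forall S T : {set (asg Ran * system Ran)},
      compatible_g S -> compatible_g T -> T != set0 ->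
      (sat_g S (Xi_g x0 T) <-> ~~ preceq_g T S)).
Proof.
split=> [SF TF S T cS _ nT | S T cS _ nT]; last exact: sat_Xi_gP.
rewrite sat_c_team_g preceq_c_team_g //; apply: sat_Xi_gP.
  by rewrite -compatible_team_g.
by rewrite /team_g imset_eq0.
Qed.
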